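(* For every odd integer $\ell\ge 7$ there exists a binary palindrome of length $\ell$ whose critical exponent is exactly $\tfrac{7}{3}$.
   Context: A word $x=x[1..n]$ has period $q$ if $x[i]=x[i+q]$ for $1\le i\le n-q$. For integers $p>q\ge1$, $x$ is a $(p/q)$-power if it has length $p$ and period $q$. The exponent $\exp(w)$ of a finite nonempty word $w$ is the largest rational $p/q$ such that $w$ is a $(p/q)$-power (with $w$ of length $p$ and period $q$, $1\le q\le p$). The critical exponent of $w$ is the maximum of $\exp(w')$ over all nonempty factors $w'$ of $w$. A palindrome is a word equal to its reversal. *)

From mathcomp Require Import all_boot all_order all_algebra.
Set Implicit Arguments. Unset Strict Implicit. Unset Printing Implicit Defensive.
Import Order.TTheory GRing.Theory Num.Theory.
Local Open Scope ring_scope.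

Definition has_period (w : seq bool) (q : nat) : bool :=
  [forall i : 'I_(size w), (i + q < size w)%N ==> (nth false w i == nth false w (i + q))].

(* The exponent of w: the largest rational |w|/q over periods 1 <= q <= |w|.
   (0 for the empty word; every nonempty word has period |w|.) *)
Definition exponent (w : seq bool) : rat :=
  foldr Num.max 0
    [seq ((size w)%:R / q%:R : rat) | q <- iota 1 (size w) & has_period w q].

Definition factors (w : seq bool) : seq (seq bool) :=
  [seq take j (drop i w) | i <- iota 0 (size w), j <- iota 1 (size w - i)].

Definition critical_exponent (w : seq bool) : rat :=
  foldr Num.max 0 [seq exponent u | u <- factors w].

Definition palindrome (w : seq bool) : bool := rev w == w.

From mathcomp Require Import all_boot all_order all_algebra.
From mathcomp Require Import zify lra.
Set Implicit Arguments. Unset Strict Implicit. Unset Printing Implicit Defensive.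
Import Order.TTheory GRing.Theory Num.Theory.

(* Let t be the Thue-Morse word and, for l = 2h+1, take w = t_{h+6} ... t_7 t_6 t_7 ... t_{h+6}.
   This palindrome contains 0110110 = t_9 t_8 t_7 t_6 t_7 t_8 t_9, of exponent 7/3.
   Conversely, let a factor of w have period p and exponent > 7/3.  It cannot lie in
   one half of w, which is a factor of the overlap-free word t (or of its reversal).
   If it crosses the centre and p >= 27, the period transports the alternations
   t_{2m} <> t_{2m+1} of t from one half into a run of four alternations, i.e. an
   overlap ababa, inside one half.  The finitely many shorter periods are settled by
   computation. *)

Section Periodicity.

Variable f : nat -> bool.

Definition periodic_on (s n p : nat) : Prop :=
  forall k, (k + p < n)%N -> f (s + k) = f (s + k + p).

Definition overlap (i p : nat) : Prop := periodic_on i (2 * p).+1 p.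

Definition periodic_onb (s n p : nat) : bool :=
  all (fun k => f (s + k) == f (s + k + p)) (iota 0 (n - p)).

Lemma periodic_onP s n p : reflect (periodic_on s n p) (periodic_onb s n p).
Proof.
apply: (iffP allP) => per k; last by rewrite mem_iota => hk; apply/eqP/per; lia.
by move=> hk; apply/eqP/per; rewrite mem_iota; lia.
Qed.

Lemma periodic_on_overlap s n p a :
  periodic_on s n p -> (s <= a)%N -> (a + 2 * p < s + n)%N -> overlap a p.
Proof.
move=> per hs hn k hk; have := per (a - s + k) ltac:(lia).
by have -> : (s + (a - s + k) = a + k)%N by lia.
Qed.

Lemma periodic_on_alt s n p m : periodic_on s n p ->
  (s + p <= m)%N -> (m.+1 < s + n)%N -> f (m - p) != f (m - p).+1 -> f m != f m.+1.
Proof.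
move=> per hs hn; have := per (m - p - s) ltac:(lia); have := per (m - p - s).+1 ltac:(lia).
have -> : (s + (m - p - s).+1 + p = m.+1)%N by lia.
have -> : (s + (m - p - s) + p = m)%N by lia.
have -> : (s + (m - p - s).+1 = (m - p).+1)%N by lia.
have -> : (s + (m - p - s) = m - p)%N by lia.
by move=> <- <-.
Qed.

Lemma alternating_xor a t : (forall m, (m < t)%N -> f (a + m) != f (a + m).+1) ->
  f (a + t) = f a (+) odd t.
Proof.
elim: t => [|t IH] alt; first by rewrite addn0 addbF.
have := alt t (ltnSn t); rewrite addnS IH => [|m hm]; last by apply: alt; lia.
by rewrite /=; case: (f (a + t).+1); case: (f a); case: (odd t).
Qed.

Lemma alternating_overlap a : (forall t, (t <= 3)%N -> f (a + t) != f (a + t).+1) ->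
  overlap a 2.
Proof.
move=> alt k hk.
have alt_xor t : (t <= 4)%N -> f (a + t) = f a (+) odd t.
  by move=> ht; apply: alternating_xor => m hm; apply: alt; lia.
by rewrite -addnA !alt_xor ?addn2 ?negbK //; lia.
Qed.

End Periodicity.

Fixpoint thue_morse_rec (fuel n : nat) : bool :=
  if fuel is fuel'.+1 then
    if n is 0 then false else odd n (+) thue_morse_rec fuel' n./2
  else false.

Definition thue_morse (n : nat) : bool := thue_morse_rec n n.

Lemma thue_morse_rec_enough fuel fuel' n : (n <= fuel)%N -> (n <= fuel')%N ->
  thue_morse_rec fuel n = thue_morse_rec fuel' n.
Proof.
elim: fuel fuel' n => [|fuel IH] [|fuel'] [|n] //= h h'.
by congr addb; apply: IH; lia.
Qed.

Lemma thue_morseS n : thue_morse n.+1 = odd n.+1 (+) thue_morse n.+1./2.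
Proof. by rewrite /thue_morse /=; congr addb; apply: thue_morse_rec_enough; lia. Qed.

Lemma thue_morse_double m : thue_morse (2 * m) = thue_morse m.
Proof.
case: m => [//|m]; have -> : (2 * m.+1 = (2 * m).+1.+1)%N by lia.
rewrite thue_morseS; have -> : ((2 * m).+2./2 = m.+1)%N by lia.
by rewrite /= oddM.
Qed.

Lemma thue_morse_doubleS m : thue_morse (2 * m).+1 = ~~ thue_morse m.
Proof.
rewrite thue_morseS; have -> : ((2 * m).+1./2 = m)%N by lia.
by rewrite /= oddM.
Qed.

Lemma thue_morse_alt n : ~~ odd n -> thue_morse n != thue_morse n.+1.
Proof.
move=> ev; have -> : n = (2 * n./2)%N by lia.
by rewrite thue_morse_doubleS thue_morse_double; case: (thue_morse _).
Qed.

Lemma thue_morse_overlap_halve a r :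
  overlap thue_morse (2 * a) (2 * r) -> overlap thue_morse a r.
Proof.
move=> per k hk; have := per (2 * k) ltac:(lia).
by rewrite -!mulnDr !thue_morse_double.
Qed.

Lemma thue_morse_overlap_align a r :
  overlap thue_morse (2 * a).+1 (2 * r) -> overlap thue_morse (2 * a) (2 * r).
Proof.
move=> per [_|k hk]; last by have := per k ltac:(lia); rewrite !addSnnS.
have := per 0 ltac:(lia); rewrite !addn0.
have -> : ((2 * a).+1 + 2 * r = (2 * (a + r)).+1)%N by lia.
by rewrite -mulnDr !thue_morse_doubleS !thue_morse_double => /negb_inj.
Qed.

Lemma thue_morse_overlap_odd i r : ~ overlap thue_morse i (2 * r).+1.
Proof.
set p := (2 * r).+1 => per.
have alt m : (m < p)%N -> thue_morse (i + p + m) != thue_morse (i + p + m).+1.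
  move=> hm; case: (boolP (odd (i + p + m))) => [odd_ipm|]; last exact: thue_morse_alt.
  apply: (periodic_on_alt per); [lia | lia |].
  by apply: thue_morse_alt; lia.
have := alternating_xor alt; rewrite -(per p); last lia.
by rewrite /p /= oddM /=; case: (thue_morse _).
Qed.

Theorem thue_morse_overlap_free i p : (0 < p)%N -> ~ overlap thue_morse i p.
Proof.
elim/ltn_ind: p i => p IH i p_gt0 per.
have [r [def_p|def_p]] : exists r, p = (2 * r)%N \/ p = (2 * r).+1
  by exists p./2; lia.
- have [a [def_i|def_i]] : exists a, i = (2 * a)%N \/ i = (2 * a).+1 by exists i./2; lia.
  + apply: (IH r _ a); [lia | lia |].
    by apply: thue_morse_overlap_halve; rewrite -def_i -def_p.
  + apply: (IH r _ a); [lia | lia |].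
    by apply/thue_morse_overlap_halve/thue_morse_overlap_align; rewrite -def_i -def_p.
- by apply: (@thue_morse_overlap_odd i r); rewrite -def_p.
Qed.

(* Position j of t_{h+6} ... t_7 t_6 t_7 ... t_{h+6}, which sits at position h. *)
Definition mirror_tm (h j : nat) : bool := thue_morse (6 + (h - j) + (j - h)).

Lemma mirror_tm_shift h c j : (h <= j + c)%N -> mirror_tm h j = mirror_tm c (j + c - h).
Proof. by move=> hj; rewrite /mirror_tm; congr thue_morse; lia. Qed.

Lemma mirror_tm_overlap_left h a p : (0 < p)%N -> (a + 2 * p <= h)%N ->
  ~ overlap (mirror_tm h) a p.
Proof.
move=> p_gt0 ha per; apply: (@thue_morse_overlap_free (6 + h - (a + 2 * p)) p p_gt0).
move=> k hk; have := per (p - k) ltac:(lia); rewrite /mirror_tm.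
have -> : (6 + (h - (a + (p - k))) + (a + (p - k) - h) = 6 + h - (a + 2 * p) + k + p)%N by lia.
by have -> : (6 + (h - (a + (p - k) + p)) + (a + (p - k) + p - h) = 6 + h - (a + 2 * p) + k)%N
  by lia.
Qed.

Lemma mirror_tm_overlap_right h a p : (0 < p)%N -> (h < a)%N ->
  ~ overlap (mirror_tm h) a p.
Proof.
move=> p_gt0 ha per; apply: (@thue_morse_overlap_free (6 + a - h) p p_gt0).
move=> k hk; have := per k hk; rewrite /mirror_tm.
have -> : (6 + (h - (a + k)) + (a + k - h) = 6 + a - h + k)%N by lia.
by have -> : (6 + (h - (a + k + p)) + (a + k + p - h) = 6 + a - h + k + p)%N by lia.
Qed.

Lemma mirror_tm_alt_left h m : (m < h)%N -> odd (h - m) ->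
  mirror_tm h m != mirror_tm h m.+1.
Proof.
move=> hm odd_hm; rewrite /mirror_tm eq_sym.
have -> : (6 + (h - m) + (m - h) = (6 + (h - m.+1) + (m.+1 - h)).+1)%N by lia.
by apply: thue_morse_alt; lia.
Qed.

Lemma mirror_tm_alt_right h m : (h < m)%N -> ~~ odd (m - h) ->
  mirror_tm h m != mirror_tm h m.+1.
Proof.
move=> hm even_mh; rewrite /mirror_tm.
have -> : (6 + (h - m.+1) + (m.+1 - h) = (6 + (h - m) + (m - h)).+1)%N by lia.
by apply: thue_morse_alt; lia.
Qed.

Section MirrorWindow.

Variables (h s n p : nat).
Hypothesis per : periodic_on (mirror_tm h) s n p.

Lemma window_alt_left_odd m : odd p ->
  (s + p <= m)%N -> (m < h)%N -> (h < s + n)%N -> mirror_tm h m != mirror_tm h m.+1.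
Proof.
move=> odd_p hsm hmh hhn; case: (boolP (odd (h - m))) => [|even_hm].
  exact: mirror_tm_alt_left.
by apply: (periodic_on_alt per) => //; [lia | apply: mirror_tm_alt_left; lia].
Qed.

Lemma window_alt_right_odd m : odd p ->
  (h + p < m)%N -> (s <= h.+1)%N -> (m.+1 < s + n)%N -> mirror_tm h m != mirror_tm h m.+1.
Proof.
move=> odd_p hhm hsh hmn; case: (boolP (odd (m - h))) => [odd_mh|].
  by apply: (periodic_on_alt per); [lia | lia | apply: mirror_tm_alt_right; lia].
by apply: mirror_tm_alt_right; lia.
Qed.

Lemma window_alt_right_even m : ~~ odd p ->
  (h.+1 < m)%N -> (s + p <= m)%N -> (m < h + p)%N -> (m.+1 < s + n)%N ->
  mirror_tm h m != mirror_tm h m.+1.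
Proof.
move=> even_p hhm hsm hmp hmn; case: (boolP (odd (m - h))) => [odd_mh|].
  by apply: (periodic_on_alt per) => //; apply: mirror_tm_alt_left; lia.
by apply: mirror_tm_alt_right; lia.
Qed.

End MirrorWindow.

Lemma mirror_tm_long_period h s n p : (27 <= p)%N -> (7 * p < 3 * n)%N ->
  (s <= h.+1)%N -> (h.+1 < s + n)%N -> ~ periodic_on (mirror_tm h) s n p.
Proof.
move=> p_ge27 hn hs hsn per; case: (boolP (odd p)) => [odd_p|even_p].
- have left_short : (h <= s + p + 3)%N.
    rewrite leqNgt; apply/negP => hl.
    apply: (@mirror_tm_overlap_left h (s + p) 2); [lia | lia |].
    by apply: alternating_overlap => t ht; apply: (window_alt_left_odd per); lia.
  have right_short : (s + n <= h + p + 6)%N.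
    rewrite leqNgt; apply/negP => hr.
    apply: (@mirror_tm_overlap_right h (h + p).+1 2); [lia | lia |].
    by apply: alternating_overlap => t ht; apply: (window_alt_right_odd per); lia.
  lia.
- set a := maxn h.+2 (s + p).
  have [ha|ha] := leqP (a + 4) (minn (h + p) (s + n - 1)).
    apply: (@mirror_tm_overlap_right h a 2); [lia | lia |].
    by apply: alternating_overlap => t ht; apply: (window_alt_right_even per); lia.
  have [hE|hE] : (h.+1 <= s + 4 \/ s + n <= h + 6)%N by lia.
  + apply: (@mirror_tm_overlap_right h h.+1 p); [lia | lia |].
    by apply: (periodic_on_overlap per); lia.
  + apply: (@mirror_tm_overlap_left h s p); [lia | lia |].
    by apply: (periodic_on_overlap per); lia.
Qed.

Definition min_window (p : nat) : nat := (7 * p) %/ 3 + 1.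

(* All windows of minimal length through the centre; by [mirror_tm_shift] the centre
   can be moved to 60, which leaves room for the longest of them. *)
Definition short_periods_excluded : bool :=
  all (fun p => all (fun d => ~~ periodic_onb (mirror_tm 60) (60 - d) (min_window p) p)
                    (iota 0 (min_window p).-1))
      (iota 1 26).

Lemma short_periods_excluded_holds : short_periods_excluded.
Proof. by vm_compute. Qed.

Lemma periodic_on_mirror_tm_shift h c s n p : (h <= s + c)%N ->
  periodic_on (mirror_tm h) s n p -> periodic_on (mirror_tm c) (s + c - h) n p.
Proof.
move=> hsc per k hk; have := per k hk.
rewrite !(@mirror_tm_shift h c); try lia.
have -> : (s + k + c - h = s + c - h + k)%N by lia.
by have -> : (s + k + p + c - h = s + c - h + k + p)%N by lia.
Qed.

Theorem mirror_tm_period_bound h s n p : (0 < p)%N ->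
  periodic_on (mirror_tm h) s n p -> (3 * n <= 7 * p)%N.
Proof.
move=> p_gt0 per; rewrite leqNgt; apply/negP => hn.
have [n0 [def_n0 hn0 n0_le_n n0_min]] :
    exists n0, [/\ n0 = min_window p, 7 * p < 3 * n0, n0 <= n & 3 * n0 <= 7 * p + 3]%N.
  by exists (min_window p); rewrite /min_window; split => //; lia.
have per0 : periodic_on (mirror_tm h) s n0 p by move=> k hk; apply: per; lia.
have [hs|hs] := ltnP h s.
  by apply: (mirror_tm_overlap_right p_gt0 hs); apply: (periodic_on_overlap per0); lia.
have [hsn|hsn] := leqP (s + n0) h.+1.
  by apply: (@mirror_tm_overlap_left h s p p_gt0); [lia | apply: (periodic_on_overlap per0); lia].
have [p_ge27|p_lt27] := leqP 27 p.
  by apply: (mirror_tm_long_period p_ge27 hn0 _ hsn per0); lia.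
have per60 := @periodic_on_mirror_tm_shift h 60 s n0 p ltac:(lia) per0.
move: short_periods_excluded_holds => /allP/(_ p); rewrite mem_iota => /(_ ltac:(lia)).
move=> /allP/(_ (h - s)); rewrite -def_n0 mem_iota => /(_ ltac:(lia)).
have -> : (60 - (h - s) = s + 60 - h)%N by lia.
by move/periodic_onP: per60 => ->.
Qed.

Lemma take_drop_mkseq (T : Type) (f : nat -> T) l i j : (i + j <= l)%N ->
  take j (drop i (mkseq f l)) = mkseq (fun k => f (i + k)) j.
Proof.
move=> hij; rewrite /mkseq -map_drop -map_take drop_iota take_iota add0n.
have -> : minn j (l - i) = j by lia.
by rewrite -(addn0 i) iotaDl -map_comp addn0.
Qed.

Lemma has_periodP w q :
  reflect (periodic_on (nth false w) 0 (size w) q) (has_period w q).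
Proof.
apply: (iffP forallP) => [per k hk | per i].
  have k_lt : (k < size w)%N by lia.
  by have /implyP/(_ hk)/eqP := per (Ordinal k_lt); rewrite !add0n.
by apply/implyP => hi; apply/eqP; have := per i hi; rewrite !add0n.
Qed.

Lemma has_period_mkseq (f : nat -> bool) n q :
  has_period (mkseq f n) q -> periodic_on f 0 n q.
Proof.
move/has_periodP; rewrite size_mkseq => per k hk.
by have := per k hk; rewrite !add0n !nth_mkseq //; lia.
Qed.

Local Open Scope ring_scope.

Section FoldrMax.

Variable R : realDomainType.

Lemma foldr_max_le (s : seq R) c :
  0 <= c -> (forall x, x \in s -> x <= c) -> foldr Num.max 0 s <= c.
Proof.
move=> c_ge0; elim: s => //= x s IH le_c; rewrite ge_max le_c ?mem_head //=.
by apply: IH => y ys; apply: le_c; rewrite in_cons ys orbT.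
Qed.

Lemma le_foldr_max (s : seq R) x : x \in s -> x <= foldr Num.max 0 s.
Proof.
elim: s => //= y s IH; rewrite in_cons le_max => /orP[/eqP->|xs]; first by rewrite lexx.
by rewrite IH ?orbT.
Qed.

End FoldrMax.

Lemma factorsP w u : reflect (exists i j, [/\ 0 < j, i + j <= size w & u = take j (drop i w)]%N)
  (u \in factors w).
Proof.
apply: (iffP allpairsPdep) => [[i [j []]]|[i [j [j_gt0 hij ->]]]].
  by rewrite !mem_iota => hi hj ->; exists i, j; split => //; lia.
by exists i, j; rewrite !mem_iota; split => //; lia.
Qed.

Lemma exponent_le w (c : rat) : 0 <= c ->
  (forall q, (0 < q)%N -> has_period w q -> (size w)%:R <= c * q%:R) -> exponent w <= c.
Proof.
move=> c_ge0 bound; apply: foldr_max_le => // x /mapP[q].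
rewrite mem_filter mem_iota => /andP[per hq] ->.
by rewrite ler_pdivrMr ?ltr0n ?bound //; lia.
Qed.

Lemma exponent_ge w q : (0 < q <= size w)%N -> has_period w q ->
  (size w)%:R / q%:R <= exponent w.
Proof.
move=> hq per; apply/le_foldr_max/map_f.
by rewrite mem_filter per mem_iota; lia.
Qed.

Lemma critical_exponent_le w (c : rat) : 0 <= c ->
  (forall u, u \in factors w -> exponent u <= c) -> critical_exponent w <= c.
Proof. by move=> c_ge0 bound; apply: foldr_max_le => // x /mapP[u /bound le_c ->]. Qed.

Lemma exponent_le_critical w u : u \in factors w -> exponent u <= critical_exponent w.
Proof. by move=> fu; apply/le_foldr_max/map_f. Qed.

Lemma palindrome_mkseq (f : nat -> bool) n :
  (forall j, (j < n)%N -> f (n.-1 - j)%N = f j) -> palindrome (mkseq f n).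
Proof.
move=> sym; apply/eqP/(@eq_from_nth _ false); rewrite size_rev // size_mkseq => j hj.
rewrite nth_rev size_mkseq // !nth_mkseq; try lia.
have -> : (n - j.+1 = n.-1 - j)%N by lia.
by rewrite sym.
Qed.

Lemma mirror_tm_palindrome h : palindrome (mkseq (mirror_tm h) (2 * h).+1).
Proof. by apply: palindrome_mkseq => j hj; rewrite /mirror_tm; congr thue_morse; lia. Qed.

Lemma critical_exponent_mirror_tm h l :
  critical_exponent (mkseq (mirror_tm h) l) <= 7%:R / 3%:R.
Proof.
apply: critical_exponent_le => // u /factorsP[i [j [j_gt0 hij ->]]].
apply: exponent_le => // q q_gt0; rewrite size_mkseq in hij.
rewrite take_drop_mkseq // size_mkseq => /has_period_mkseq per.
have /(mirror_tm_period_bound q_gt0) : periodic_on (mirror_tm h) i j q.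
  by move=> k hk; rewrite -!addnA; apply: per.
by rewrite -(ler_nat rat) !natrM; lra.
Qed.

Lemma critical_exponent_mirror_tm_ge h l : (3 <= h)%N -> (h + 4 <= l)%N ->
  7%:R / 3%:R <= critical_exponent (mkseq (mirror_tm h) l).
Proof.
move=> h_ge3 hl.
have center : take 7 (drop (h - 3) (mkseq (mirror_tm h) l)) = mkseq (mirror_tm 3) 7.
  rewrite take_drop_mkseq; last lia.
  by apply: eq_mkseq => k; rewrite (@mirror_tm_shift h 3); [congr mirror_tm|]; lia.
have: exponent (mkseq (mirror_tm 3) 7) <= critical_exponent (mkseq (mirror_tm h) l).
  by rewrite -center; apply/exponent_le_critical/factorsP; exists (h - 3)%N, 7%N;
    rewrite size_mkseq; split => //; lia.
apply: le_trans; have := @exponent_ge (mkseq (mirror_tm 3) 7) 3.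
rewrite size_mkseq => period3_exp; apply: period3_exp => //.
by apply/has_periodP/periodic_onP; vm_compute.
Qed.

Theorem mainTheorem3 (l : nat) :
  (7 <= l)%N -> odd l ->
  exists w : seq bool,
    [/\ size w = l, palindrome w & critical_exponent w = (7%:R / 3%:R)%R].
Proof.
move=> l_ge7 odd_l; have def_l : l = (2 * l./2).+1 by lia.
exists (mkseq (mirror_tm l./2) l); split.
- by rewrite size_mkseq.
- by have := mirror_tm_palindrome l./2; rewrite -def_l.
- apply/eqP; rewrite eq_le critical_exponent_mirror_tm critical_exponent_mirror_tm_ge //; lia.
Qed.
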